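(* Let $r\in(0,1)$ and $S_2^{in}>0$ be fixed, and work in the plane $(D,S_1^{in})$. Suppose $m_1>\mu_2(S_2^{in})$ and let $D_1^*=r\mu_2(S_2^{in})$, $D_2^*=(1-r)\mu_2(S_2^{in})$. Then the curve $\gamma_0=\{S_1^{in}=\lambda_1^1(D,r)\}$ and the vertical line $\gamma_6=\{D=D_1^*\}$ intersect at $P_1=(D_1^*,\lambda_1^1(D_1^*,r))$. If in addition $S_2^{in}\ge S_2^m$, then $\gamma_0$, $\gamma_5=\{S_1^{in}=F_{12}(D,r,S_2^{in})\}$ and $\gamma_6$ intersect at the same point $P_1$; if $S_2^{in}<S_2^m$, then $\gamma_0$, $\gamma_4=\{S_1^{in}=F_{11}(D,r,S_2^{in})\}$ and $\gamma_6$ intersect at $P_1$. Moreover (for $D$ where the functions are defined): \begin{itemize} \item if $D<D_1^*$, then $F_{11}(D,r,S_2^{in})<\lambda_1^1(D,r)<F_{12}(D,r,S_2^{in})$; \item if $D>D_1^*$ and $S_2^{in}\ge S_2^m$, then $F_{11}<F_{12}<\lambda_1^1$; \item if $D>D_1^*$ and $S_2^{in}<S_2^m$, then $\lambda_1^1<F_{11}<F_{12}$. \end{itemize} Likewise, the curve $\gamma_1=\{S_1^{in}=\lambda_1^2(D,r)\}$ and the vertical line $\gamma_7=\{D=D_2^*\}$ intersect at $P_2=(D_2^*,\lambda_1^2(D_2^*,r))$; if $S_2^{in}\ge S_2^m$, then $\gamma_1$, $\gamma_3=\{S_1^{in}=F_{22}(D,r,S_2^{in})\}$ and $\gamma_7$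 intersect at $P_2$; if $S_2^{in}<S_2^m$, then $\gamma_1$, $\gamma_2=\{S_1^{in}=F_{21}(D,r,S_2^{in})\}$ and $\gamma_7$ intersect at $P_2$. Moreover: \begin{itemize} \item if $D<D_2^*$, then $F_{21}<\lambda_1^2<F_{22}$; \item if $D>D_2^*$ and $S_2^{in}\ge S_2^m$, then $F_{21}<F_{22}<\lambda_1^2$; \item if $D>D_2^*$ and $S_2^{in}<S_2^m$, then $\lambda_1^2<F_{21}<F_{22}$. \end{itemize}
   Context: Let $k_1,k_2>0$, $r_1=r$, $r_2=1-r$, $D_i=D/r_i$. $\mu_1\in C^1(\mathbb R_+)$ with $\mu_1(0)=0$, $\mu_1(+\infty)=m_1$, $\mu_1'>0$ on $(0,\infty)$; $\mu_2\in C^1(\mathbb R_+)$ with $\mu_2(0)=0$, $\mu_2(+\infty)=0$, and there is $S_2^m>0$ with $\mu_2'>0$ on $(0,S_2^m)$, $\mu_2'<0$ on $(S_2^m,\infty)$. For $i=1,2$: $\lambda_1^i(D,r)$ is the unique solution of $\mu_1(S)=D_i$ for $0<D<r_im_1$ ($+\infty$ otherwise); $\lambda_2^{i1}(D,r)\le\lambda_2^{i2}(D,r)$ are the solutions of $\mu_2(S)=D_i$ for $0<D\le r_i\mu_2(S_2^m)$ ($+\infty$ otherwise); $F_{ij}(D,r,S_2^{in})=\lambda_1^i(D,r)+\frac{k_1}{k_2}(\lambda_2^{ij}(D,r)-S_2^{in})$, defined for $0<D<\min(r_im_1,r_i\mu_2(S_2^m))$. *)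

From HB Require Import structures.
From mathcomp Require Import all_boot all_order all_algebra.
From mathcomp Require Import all_classical all_reals all_analysis.
Set Implicit Arguments. Unset Strict Implicit. Unset Printing Implicit Defensive.
Import Order.TTheory GRing.Theory Num.Theory numFieldNormedType.Exports.
Local Open Scope classical_set_scope.
Local Open Scope ring_scope.

Section Defs.
Variable R : realType.

(* lambda_1^i(D,r): the (unique) solution S >= 0 of mu1(S) = D / r_i.
   Only used for 0 < D < r_i m1 (outside, the value is irrelevant junk). *)
Definition lambda1 (mu1 : R -> R) (ri D : R) : R :=
  xget 0 [set S | 0 <= S /\ mu1 S = D / ri].

Definition lambda2_lo (mu2 : R -> R) (ri D : R) : R :=
  xget 0 [set S | [/\ 0 <= S, mu2 S = D / ri &
                  forall S', 0 <= S' -> mu2 S' = D / ri -> S <= S']].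

Definition lambda2_hi (mu2 : R -> R) (ri D : R) : R :=
  xget 0 [set S | [/\ 0 <= S, mu2 S = D / ri &
                  forall S', 0 <= S' -> mu2 S' = D / ri -> S' <= S]].

Definition lambda2 (mu2 : R -> R) (ri : R) (j : nat) (D : R) : R :=
  if j == 1%N then lambda2_lo mu2 ri D else lambda2_hi mu2 ri D.

Definition Fij (mu1 mu2 : R -> R) (k1 k2 ri : R) (j : nat) (S2in D : R) : R :=
  lambda1 mu1 ri D + k1 / k2 * (lambda2 mu2 ri j D - S2in).

(* graph {S1in = f(D)} of f over the domain dom, in the (D, S1in) plane *)
Definition graph (dom : set R) (f : R -> R) : set (R * R) :=
  [set p | dom p.1 /\ p.2 = f p.1].

Definition vert_line (a : R) : set (R * R) := [set p | p.1 = a].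

End Defs.

From HB Require Import structures.
From mathcomp Require Import all_boot all_order all_algebra.
From mathcomp Require Import all_classical all_reals all_analysis.
Import Order.TTheory GRing.Theory Num.Theory numFieldNormedType.Exports.
Local Open Scope classical_set_scope.
Local Open Scope ring_scope.

(* Only mu2 matters: F_ij - lambda_1^i = k1/k2 (lambda_2^ij - S2in), so every
   comparison amounts to locating S2in relative to the two roots of
   mu2(S) = D / r_i, one on the increasing branch [0, S2m] and one on the
   decreasing branch [S2m, +oo).  At D = r_i mu2(S2in), S2in is itself the root
   on its own branch.  For smaller D the level drops below mu2(S2in), so S2in
   lies strictly between the two roots; for larger D it lies outside them, on
   the side of its own branch. *)

Section Graphs.
Variable R : realType.

Lemma graph_vert_line (dom : set R) (f : R -> R) (a : R) :
  dom a -> graph dom f `&` vert_line a = [set (a, f a)].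
Proof.
move=> doma; rewrite /graph /vert_line; apply/seteqP.
by split=> -[x y] /= => [[[_ ->] ->] | [-> ->]].
Qed.

Lemma graph2_vert_line (dom dom' : set R) (f g : R -> R) (a : R) :
  dom a -> dom' a -> g a = f a ->
  graph dom f `&` graph dom' g `&` vert_line a = [set (a, f a)].
Proof.
move=> doma dom'a gfa.
rewrite /graph /vert_line; apply/seteqP.
by split=> -[x y] /= => [[[[_ ->] _] ->] | [-> ->]].
Qed.

End Graphs.

Section FijOrder.
Variables (R : realType) (mu1 mu2 : R -> R) (k1 k2 ri S2in D : R).
Hypotheses (k1_gt0 : 0 < k1) (k2_gt0 : 0 < k2).

Lemma Fij_lt_lambda1 j :
  (Fij mu1 mu2 k1 k2 ri j S2in D < lambda1 mu1 ri D) =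
  (lambda2 mu2 ri j D < S2in).
Proof. by rewrite /Fij gtrDl pmulr_rlt0 ?divr_gt0 // subr_lt0. Qed.

Lemma lambda1_lt_Fij j :
  (lambda1 mu1 ri D < Fij mu1 mu2 k1 k2 ri j S2in D) =
  (S2in < lambda2 mu2 ri j D).
Proof. by rewrite /Fij ltrDl pmulr_rgt0 ?divr_gt0 // subr_gt0. Qed.

Lemma Fij_lt_Fij j j' :
  (Fij mu1 mu2 k1 k2 ri j S2in D < Fij mu1 mu2 k1 k2 ri j' S2in D) =
  (lambda2 mu2 ri j D < lambda2 mu2 ri j' D).
Proof. by rewrite /Fij ltrD2l ltr_pM2l ?divr_gt0 // ltrD2r. Qed.

Lemma Fij_eq_lambda1 j :
  lambda2 mu2 ri j D = S2in -> Fij mu1 mu2 k1 k2 ri j S2in D = lambda1 mu1 ri D.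
Proof. by rewrite /Fij => ->; rewrite subrr mulr0 addr0. Qed.

End FijOrder.

Section Unimodal.
Variables (R : realType) (mu : R -> R) (S : R).
Hypotheses (mu_cont : {within [set x : R | 0 <= x], continuous mu})
  (mu_der : forall x, 0 < x -> derivable mu x 1)
  (mu0 : mu 0 = 0)
  (mu_lim : mu x @[x --> +oo] --> 0)
  (S_gt0 : 0 < S)
  (mu'_gt0 : forall x, 0 < x < S -> 0 < derive1 mu x)
  (mu'_lt0 : forall x, S < x -> derive1 mu x < 0).

Lemma mu_cont_itv (a b : R) : 0 <= a -> {within `[a, b], continuous mu}.
Proof.
move=> a0; apply: continuous_subspaceW mu_cont => x /=.
by rewrite in_itv /= => /andP[/(le_trans a0)].
Qed.

Lemma mu_le_incr : {in `[0, S] &, {mono mu : x y / x <= y}}.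
Proof.
apply/le_mono_in/gtr0_derive1_lt_cc; last exact: mu_cont_itv.
- by move=> x; rewrite in_itv /= => /andP[x0 _]; exact: mu_der.
- by move=> x; rewrite in_itv /=; exact: mu'_gt0.
Qed.

Lemma mu_le_decr : {in `[S, +oo[ &, {mono mu : x y /~ x <= y}}.
Proof.
apply/le_nmono_in => y x; rewrite !in_itv /= !andbT => Sy Sx xy.
apply: (@ltr0_derive1_lt_cc _ _ S y); rewrite ?in_itv /= ?Sx ?Sy ?lexx ?(ltW xy) //.
- by move=> z; rewrite in_itv /= => /andP[/(lt_trans S_gt0) z0 _]; exact: mu_der.
- by move=> z; rewrite in_itv /= => /andP[Sz _]; exact: mu'_lt0.
- exact/mu_cont_itv/ltW.
Qed.

Lemma mu_lt_incr : {in `[0, S] &, {mono mu : x y / x < y}}.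
Proof. exact/leW_mono_in/mu_le_incr. Qed.

Lemma mu_lt_decr : {in `[S, +oo[ &, {mono mu : x y /~ x < y}}.
Proof. exact/leW_nmono_in/mu_le_decr. Qed.

Lemma mu_gt0 x : 0 < x -> 0 < mu x.
Proof.
move=> x0; have [xS|Sx] := leP x S.
  by rewrite -mu0 mu_lt_incr // in_itv /= ?lexx ?xS ?(ltW x0) ?(ltW S_gt0).
have Sx1 : S <= x + 1 by rewrite (le_trans (ltW Sx)) // lerDl.
have mux1 : mu (x + 1) < mu x.
  by rewrite mu_lt_decr ?in_itv /= ?ltrDl ?(ltW Sx) ?Sx1.
rewrite ltNge; apply/negP => mux_le0.
(* mu decreases past x + 1, yet tends to 0 > mu (x + 1) *)
near +oo_R => t.
have x1t : x + 1 < t by near: t; apply: nbhs_pinfty_gt; exact: num_real.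
have : mu t < mu (x + 1).
  by rewrite mu_lt_decr // in_itv /= ?Sx1 ?(le_trans Sx1 (ltW x1t)).
apply/negP; rewrite -leNgt ltW //; near: t.
by apply: cvgr_gt mu_lim _ _; exact: lt_le_trans mux_le0.
Unshelve. all: end_near.
Qed.

Lemma mu_le_peak x : 0 <= x -> mu x <= mu S.
Proof.
move=> x0; have [xS|Sx] := leP x S.
  by rewrite mu_le_incr // in_itv /= ?x0 ?xS ?lexx ?(ltW S_gt0).
by rewrite ltW // mu_lt_decr ?in_itv /= ?lexx ?(ltW Sx).
Qed.

Lemma exists_root_incr c : 0 <= c <= mu S -> exists2 a, a \in `[0, S] & mu a = c.
Proof.
case/andP=> c0 cS; apply: IVT; [exact: ltW | exact: mu_cont_itv |].
by rewrite ge_min le_max mu0 c0 cS orbT.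
Qed.

Lemma exists_root_decr c : 0 < c <= mu S -> exists2 b, S <= b & mu b = c.
Proof.
case/andP=> c0 cS; near +oo_R => t.
have St : S <= t by near: t; apply: nbhs_pinfty_ge; exact: num_real.
have mut_lt : mu t < c by near: t; exact: cvgr_lt mu_lim _ c0.
have [] := @IVT _ mu S t c St (@mu_cont_itv S t (ltW S_gt0)).
  by rewrite ge_min le_max cS (ltW mut_lt) orbT.
by move=> b; rewrite in_itv /= => /andP[Sb _]; exists b.
Unshelve. all: end_near.
Qed.

Lemma root_incr_le a y : a \in `[0, S] -> 0 <= y -> mu a <= mu y -> a <= y.
Proof.
move=> aS y0 muay; have [yS|Sy] := leP y S.
  by move: muay; rewrite mu_le_incr // in_itv /= y0.
by rewrite (le_trans _ (ltW Sy)) //; move: aS; rewrite in_itv /= => /andP[].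
Qed.

Lemma root_incr_lt a y : a \in `[0, S] -> 0 <= y -> mu a < mu y -> a < y.
Proof.
move=> aS y0 muay; have [yS|Sy] := leP y S.
  by move: muay; rewrite mu_lt_incr // in_itv /= y0.
by rewrite (le_lt_trans _ Sy) //; move: aS; rewrite in_itv /= => /andP[].
Qed.

Lemma root_decr_ge b y : S <= b -> 0 <= y -> mu b <= mu y -> y <= b.
Proof.
move=> Sb y0 muby; have [yS|Sy] := leP y S; first exact: le_trans Sb.
by move: muby; rewrite mu_le_decr // in_itv /= ?Sb ?(ltW Sy).
Qed.

Lemma root_decr_gt b y : S <= b -> 0 <= y -> mu b < mu y -> y < b.
Proof.
move=> Sb y0 muby; have [yS|Sy] := leP y S.
  rewrite (le_lt_trans yS) // lt_neqAle Sb andbT; apply: contraTneq muby => <-.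
  by rewrite -leNgt mu_le_peak.
by move: muby; rewrite mu_lt_decr // in_itv /= ?Sb ?(ltW Sy).
Qed.

Lemma lambda2_lo_root ri D a :
  a \in `[0, S] -> mu a = D / ri -> lambda2_lo mu ri D = a.
Proof.
move=> aS mua; have a0 : 0 <= a by move: aS; rewrite in_itv /= => /andP[].
have a_least y : 0 <= y -> mu y = D / ri -> a <= y.
  by move=> y0 muy; apply: root_incr_le; rewrite // muy mua.
apply: xget_unique => [|y [y0 muy y_least]]; first by split.
by apply/le_anti/andP; split; [apply: y_least | apply: a_least].
Qed.

Lemma lambda2_hi_root ri D b :
  S <= b -> mu b = D / ri -> lambda2_hi mu ri D = b.
Proof.
move=> Sb mub; have b0 : 0 <= b by rewrite (le_trans (ltW S_gt0)).
have b_greatest y : 0 <= y -> mu y = D / ri -> y <= b.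
  by move=> y0 muy; apply: root_decr_ge; rewrite // muy mub.
apply: xget_unique => [|y [y0 muy y_greatest]]; first by split.
by apply/le_anti/andP; split; [apply: b_greatest | apply: y_greatest].
Qed.

Section Level.
Variables (ri D : R).
Hypotheses (ri_gt0 : 0 < ri) (D_gt0 : 0 < D) (D_lt : D < ri * mu S).

Let level_gt0 : 0 < D / ri. Proof. exact: divr_gt0. Qed.
Let level_lt : D / ri < mu S. Proof. by rewrite ltr_pdivrMr // mulrC. Qed.

Lemma lambda2_lo_spec :
  lambda2_lo mu ri D \in `[0, S[%R /\ mu (lambda2_lo mu ri D) = D / ri.
Proof.
have [|a aS mua] := @exists_root_incr (D / ri); first by rewrite !ltW.
rewrite (lambda2_lo_root _ _ _ aS mua); split => //.
move: aS; rewrite !in_itv /= lt_neqAle => /andP[-> ->]; rewrite andbT.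
by apply: contraTneq level_lt => aS; rewrite -mua aS ltxx.
Qed.

Lemma lambda2_hi_spec : S < lambda2_hi mu ri D /\ mu (lambda2_hi mu ri D) = D / ri.
Proof.
have [|b Sb mub] := @exists_root_decr (D / ri); first by rewrite level_gt0 ltW.
rewrite (lambda2_hi_root _ _ _ Sb mub); split => //.
rewrite lt_neqAle Sb andbT; apply: contraTneq level_lt => ->.
by rewrite mub ltxx.
Qed.

Lemma lambda2_lo_lt_hi : lambda2_lo mu ri D < lambda2_hi mu ri D.
Proof.
have [+ _] := lambda2_lo_spec; rewrite in_itv /= => /andP[_ aS].
by have [Sb _] := lambda2_hi_spec; exact: lt_trans Sb.
Qed.

Variable s : R.
Hypothesis s_ge0 : 0 <= s.

Let level_lt_mu : (D / ri < mu s) = (D < ri * mu s).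
Proof. by rewrite ltr_pdivrMr // mulrC. Qed.

Let mu_lt_level : (mu s < D / ri) = (ri * mu s < D).
Proof. by rewrite ltr_pdivlMr // mulrC. Qed.

Lemma lambda2_lo_lt : D < ri * mu s -> lambda2_lo mu ri D < s.
Proof.
have [aS mua] := lambda2_lo_spec; rewrite -level_lt_mu -mua.
by apply: root_incr_lt => //; exact: subset_itv_co_cc.
Qed.

Lemma lt_lambda2_hi : D < ri * mu s -> s < lambda2_hi mu ri D.
Proof.
have [Sb mub] := lambda2_hi_spec; rewrite -level_lt_mu -mub.
exact: root_decr_gt (ltW Sb) s_ge0.
Qed.

Lemma lambda2_hi_lt : S <= s -> ri * mu s < D -> lambda2_hi mu ri D < s.
Proof.
have [Sb mub] := lambda2_hi_spec => Ss; rewrite -mu_lt_level -mub.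
by rewrite mu_lt_decr // in_itv /= ?Ss ?(ltW Sb).
Qed.

Lemma lt_lambda2_lo : s <= S -> ri * mu s < D -> s < lambda2_lo mu ri D.
Proof.
have [aS mua] := lambda2_lo_spec => sS; rewrite -mu_lt_level -mua.
rewrite mu_lt_incr ?in_itv /= ?s_ge0 ?sS //; exact: subset_itv_co_cc.
Qed.

End Level.

Lemma lambda1_Fij_crossing (mu1 : R -> R) (m1 k1 k2 ri s : R) :
  0 < k1 -> 0 < k2 -> 0 < ri -> 0 < s -> mu s < m1 ->
  let Ds := ri * mu s in
  let dom1 := [set D : R | 0 < D < ri * m1] in
  let dom2 := [set D : R | 0 < D <= ri * mu S] in
  let domF := [set D : R | 0 < D < Num.min (ri * m1) (ri * mu S)] in
  let l := lambda1 mu1 ri in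
  let F j := Fij mu1 mu k1 k2 ri j s in
  graph dom1 l `&` vert_line Ds = [set (Ds, l Ds)] /\
  (S <= s -> graph dom1 l `&` graph (dom1 `&` dom2) (F 2%N) `&` vert_line Ds
             = [set (Ds, l Ds)]) /\
  (s < S -> graph dom1 l `&` graph (dom1 `&` dom2) (F 1%N) `&` vert_line Ds
            = [set (Ds, l Ds)]) /\
  (forall D, domF D -> D < Ds -> F 1%N D < l D < F 2%N D) /\
  (forall D, domF D -> Ds < D -> S <= s -> F 1%N D < F 2%N D < l D) /\
  (forall D, domF D -> Ds < D -> s < S -> l D < F 1%N D < F 2%N D).
Proof.
move=> k1_gt0 k2_gt0 ri_gt0 s_gt0 mus_lt Ds dom1 dom2 domF l F.
have s_ge0 := ltW s_gt0.
have Ds_dom1 : dom1 Ds by rewrite /dom1 /Ds /= mulr_gt0 ?mu_gt0 //= ltr_pM2l.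
have Ds_dom12 : (dom1 `&` dom2) Ds.
  by split; rewrite // /dom2 /Ds /= mulr_gt0 ?mu_gt0 //= ler_pM2l ?mu_le_peak.
have level : mu s = Ds / ri by rewrite /Ds mulrC mulKf ?gt_eqF.
have domF_level D : domF D -> 0 < D /\ D < ri * mu S.
  by rewrite /domF /= lt_min => /andP[-> /andP[_ ->]].
split; first exact: graph_vert_line.
split=> [Ss|].
  apply: graph2_vert_line => //; apply: Fij_eq_lambda1; exact: lambda2_hi_root.
split=> [sS|].
  apply: graph2_vert_line => //; apply: Fij_eq_lambda1.
  by apply: lambda2_lo_root; rewrite // in_itv /= s_ge0 ltW.
split=> [D /domF_level[D_gt0 D_lt] DDs|].
  by rewrite Fij_lt_lambda1 // lambda1_lt_Fij // lambda2_lo_lt // lt_lambda2_hi.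
split=> D /domF_level[D_gt0 D_lt] DDs => [Ss|sS].
  by rewrite Fij_lt_Fij // Fij_lt_lambda1 // lambda2_lo_lt_hi // lambda2_hi_lt.
by rewrite lambda1_lt_Fij // Fij_lt_Fij // lt_lambda2_lo ?ltW // lambda2_lo_lt_hi.
Qed.

End Unimodal.

Theorem proposition4p2 (R : realType) (mu1 mu2 : R -> R) (m1 S2m k1 k2 r S2in : R)
  (* mu1 in C^1(R_+), mu1(0) = 0, mu1(+oo) = m1, mu1' > 0 on (0,oo) *)
  (mu1_cont : {within [set x : R | 0 <= x], continuous mu1})
  (mu1_der : forall x, 0 < x -> derivable mu1 x 1)
  (mu1_C1 : forall x, 0 < x -> {for x, continuous (derive1 mu1)})
  (mu1_0 : mu1 0 = 0)
  (mu1_lim : mu1 x @[x --> +oo] --> m1)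
  (mu1'_pos : forall x, 0 < x -> 0 < (derive1 mu1) x)
  (* mu2 in C^1(R_+), mu2(0) = 0, mu2(+oo) = 0, increasing then decreasing *)
  (mu2_cont : {within [set x : R | 0 <= x], continuous mu2})
  (mu2_der : forall x, 0 < x -> derivable mu2 x 1)
  (mu2_C1 : forall x, 0 < x -> {for x, continuous (derive1 mu2)})
  (mu2_0 : mu2 0 = 0)
  (mu2_lim : mu2 x @[x --> +oo] --> 0)
  (S2m_pos : 0 < S2m)
  (mu2'_pos : forall x, 0 < x < S2m -> 0 < (derive1 mu2) x)
  (mu2'_neg : forall x, S2m < x -> (derive1 mu2) x < 0)
  (k1_pos : 0 < k1) (k2_pos : 0 < k2)
  (r_pos : 0 < r) (r_lt1 : r < 1)
  (S2in_pos : 0 < S2in)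
  (m1_gt : mu2 S2in < m1) :
  let r1 := r in let r2 := 1 - r in
  let D1s := r * mu2 S2in in let D2s := (1 - r) * mu2 S2in in
  (* natural domains of lambda_1^i, lambda_2^{ij}, and the (open) domain of F_ij *)
  let dom1 ri := [set D : R | 0 < D < ri * m1] in
  let dom2 ri := [set D : R | 0 < D <= ri * mu2 S2m] in
  let domF ri := [set D : R | 0 < D < Num.min (ri * m1) (ri * mu2 S2m)] in
  let l11 := lambda1 mu1 r1 in let l12 := lambda1 mu1 r2 in
  let F i j := Fij mu1 mu2 k1 k2 (if i == 1%N then r1 else r2) j S2in in
  (
   (* point P1 *)
   graph (dom1 r1) l11 `&` vert_line D1s = [set (D1s, l11 D1s)] /\
   (S2m <= S2in ->
      graph (dom1 r1) l11 `&` graph (dom1 r1 `&` dom2 r1) (F 1%N 2%N) `&` vert_line D1s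
      = [set (D1s, l11 D1s)]) /\
   (S2in < S2m ->
      graph (dom1 r1) l11 `&` graph (dom1 r1 `&` dom2 r1) (F 1%N 1%N) `&` vert_line D1s
      = [set (D1s, l11 D1s)]) /\
   (forall D, domF r1 D -> D < D1s ->
      F 1%N 1%N D < l11 D < F 1%N 2%N D)
  /\
   (forall D, domF r1 D -> D1s < D -> S2m <= S2in ->
      F 1%N 1%N D < F 1%N 2%N D < l11 D) /\
   (forall D, domF r1 D -> D1s < D -> S2in < S2m ->
      l11 D < F 1%N 1%N D < F 1%N 2%N D) )
  /\
  (
   (* point P2 *)
   graph (dom1 r2) l12 `&` vert_line D2s = [set (D2s, l12 D2s)] /\
   (S2m <= S2in ->
      graph (dom1 r2) l12 `&` graph (dom1 r2 `&` dom2 r2) (F 2%N 2%N) `&` vert_line D2s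
      = [set (D2s, l12 D2s)]) /\
   (S2in < S2m ->
      graph (dom1 r2) l12 `&` graph (dom1 r2 `&` dom2 r2) (F 2%N 1%N) `&` vert_line D2s
      = [set (D2s, l12 D2s)]) /\
   (forall D, domF r2 D -> D < D2s ->
      F 2%N 1%N D < l12 D < F 2%N 2%N D)
  /\
   (forall D, domF r2 D -> D2s < D -> S2m <= S2in ->
      F 2%N 1%N D < F 2%N 2%N D < l12 D) /\
   (forall D, domF r2 D -> D2s < D -> S2in < S2m ->
      l12 D < F 2%N 1%N D < F 2%N 2%N D) ).
Proof.
move=> r1 r2 D1s D2s dom1 dom2 domF l11 l12 F.
have r2_gt0 : 0 < 1 - r by rewrite subr_gt0.
by split; apply: lambda1_Fij_crossing.
Qed.
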